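(* Let $0<\sigma<\tau$, $\mu>0$, $\kappa_2\in(0,1)$ and $t_2\in(\sigma,\tau)$. For every $\omega\ge(1-\kappa_2)/(\tau-t_2)$, any solution $(x(t),y(t))$ on $[\sigma,\tau]$ of \[ x'=y,\qquad y'=\mu a^-(t)g(x) \] with $x(t_2)\ge\kappa_2$ and $y(t_2)\ge\omega$ satisfies $x(\tau)\ge1$ and $y(\tau)\ge\omega$.
   Context: $a\in L^1(\sigma,\tau)$ with negative part $a^-\ge0$. $g\colon\mathbb{R}\to[0,+\infty)$ is the extension by zero outside $[0,1]$ of a locally Lipschitz continuous function $g\colon[0,1]\to[0,+\infty)$ with $g(0)=g(1)=0$, $g(s)>0$ for $0<s<1$ and $\lim_{s\to0^+}g(s)/s=0$. Solutions are in the Carathéodory sense. *)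

From HB Require Import structures.
From mathcomp Require Import all_boot all_order all_algebra.
From mathcomp Require Import all_classical all_reals all_analysis.
Set Implicit Arguments. Unset Strict Implicit. Unset Printing Implicit Defensive.
Import Order.TTheory GRing.Theory Num.Theory.
Import numFieldNormedType.Exports.
Local Open Scope classical_set_scope.
Local Open Scope ring_scope.

Definition negpart (R : realType) (a : R -> R) : R -> R :=
  fun t => Num.max (- a t) 0.

Definition L1_on (R : realType) (sigma tau : R) (a : R -> R) : Prop :=
  (@lebesgue_measure R).-integrable `[sigma, tau] (EFin \o a).

Definition loc_lipschitz_01 (R : realType) (h : R -> R) : Prop :=
  forall s0, 0 <= s0 <= 1 ->
    exists r : R, exists L : R, 0 < r /\
      forall s1 s2, 0 <= s1 <= 1 -> 0 <= s2 <= 1 ->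
        `|s1 - s0| < r -> `|s2 - s0| < r ->
        `|h s1 - h s2| <= L * `|s1 - s2|.

Definition g_hyp (R : realType) (g : R -> R) : Prop :=
  (forall s, 0 <= g s) /\
  (forall s, (s < 0) || (1 < s) -> g s = 0) /\
  loc_lipschitz_01 g /\
  g 0 = 0 /\ g 1 = 0 /\
  (forall s, 0 < s < 1 -> 0 < g s) /\
  (g s / s @[s --> 0^'+] --> 0).

(* (x,y) is a Caratheodory solution on [sigma,tau] of
     x' = y,  y' = mu a^-(t) g(x):
   x, y are absolutely continuous with x' = y, y' = mu a^- g(x) a.e.,
   written in the equivalent integral form (integrable right-hand sides). *)
Definition cara_solution (R : realType) (sigma tau mu : R) (a g : R -> R)
    (x y : R -> R) : Prop :=
  [/\ (@lebesgue_measure R).-integrable `[sigma, tau] (EFin \o y),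
      (@lebesgue_measure R).-integrable `[sigma, tau]
          (EFin \o (fun s => mu * negpart a s * g (x s))),
      (forall t, sigma <= t <= tau ->
          x t = x sigma + Rintegral (@lebesgue_measure R) `[sigma, t] y)
    & (forall t, sigma <= t <= tau ->
          y t = y sigma + Rintegral (@lebesgue_measure R) `[sigma, t]
                  (fun s => mu * negpart a s * g (x s)))].

From HB Require Import structures.
From mathcomp Require Import all_boot all_order all_algebra.
From mathcomp Require Import all_classical all_reals all_analysis.
Import Order.TTheory GRing.Theory Num.Theory.
Import numFieldNormedType.Exports.
Local Open Scope classical_set_scope.
Local Open Scope ring_scope.

(* Since a^- g >= 0, y is nondecreasing, so y >= omega on [t2, tau]; hence x
   gains at least omega (tau - t2) >= 1 - kappa2 between t2 and tau. *)

Lemma lebesgue_measure_itv_oc (R : realType) (u v : R) :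
  u <= v -> lebesgue_measure `]u, v] = (v - u)%:E.
Proof.
rewrite le_eqVlt => /predU1P[<-|uv]; last by rewrite lebesgue_measure_itv lte_fin uv.
by rewrite set_itv_ge ?bnd_simp ?ltxx // measure0 subrr.
Qed.

Lemma Rintegral_itv_oc_cst (R : realType) (u v k : R) :
  u <= v -> \int[lebesgue_measure]_(s in `]u, v]) k = k * (v - u).
Proof. by move=> uv; rewrite Rintegral_cst //= lebesgue_measure_itv_oc. Qed.

Lemma integrable_itv_oc_cst (R : realType) (u v k : R) :
  u <= v -> lebesgue_measure.-integrable `]u, v] (EFin \o cst k).
Proof.
move=> uv; apply: measurable_bounded_integrable => //.
- by rewrite /= lebesgue_measure_itv_oc // ltry.
- exact: bounded_cst.
Qed.

Definition primitive_on {R : realType} (sigma tau : R) (f F : R -> R) : Prop :=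
  forall t, sigma <= t <= tau -> F t = F sigma + \int[lebesgue_measure]_(s in `[sigma, t]) f s.

Section Primitive.
Context {R : realType} {sigma tau : R} {f F : R -> R}.
Hypothesis f_int : lebesgue_measure.-integrable `[sigma, tau] (EFin \o f).
Hypothesis F_prim : primitive_on sigma tau f F.

Lemma primitive_increment (u v : R) : sigma <= u -> u <= v -> v <= tau ->
  F v - F u = \int[lebesgue_measure]_(s in `]u, v]) f s.
Proof.
move=> su uv vt.
rewrite (F_prim v) ?(le_trans su uv) // (F_prim u) ?su ?(le_trans uv vt) //.
rewrite opprD addrACA subrr add0r; apply: Rintegral_itvB; rewrite ?bnd_simp //.
by apply: integrableS f_int => //; apply: subset_itvl; rewrite bnd_simp.
Qed.

Lemma primitive_increment_ge (c u v : R) : sigma <= u -> u <= v -> v <= tau ->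
  (forall s, u < s <= v -> c <= f s) -> c * (v - u) <= F v - F u.
Proof.
move=> su uv vt cf; rewrite primitive_increment // -Rintegral_itv_oc_cst //.
apply: le_Rintegral => //.
- exact: integrable_itv_oc_cst.
- by apply: integrableS f_int => //; apply: subset_itv; rewrite bnd_simp.
Qed.

Lemma primitive_nondecreasing (u v : R) : (forall s, 0 <= f s) ->
  sigma <= u -> u <= v -> v <= tau -> F u <= F v.
Proof.
move=> f_ge0 su uv vt; rewrite -subr_ge0 -(mul0r (v - u)).
exact: primitive_increment_ge.
Qed.

End Primitive.

Lemma negpart_ge0 (R : realType) (a : R -> R) (t : R) : 0 <= negpart a t.
Proof. by rewrite /negpart le_max lexx orbT. Qed.

Theorem lemma2p6 (R : realType) (sigma tau mu kappa2 t2 : R) (a g : R -> R)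
  (hst : 0 < sigma) (hst' : sigma < tau) (hmu : 0 < mu)
  (hk : 0 < kappa2 < 1) (ht2 : sigma < t2 < tau)
  (ha : L1_on sigma tau a) (hg : g_hyp g) :
  forall omega : R, (1 - kappa2) / (tau - t2) <= omega ->
  forall x y : R -> R, cara_solution sigma tau mu a g x y ->
  kappa2 <= x t2 -> omega <= y t2 ->
  1 <= x tau /\ omega <= y tau.
Proof.
move=> omega homega x y [y_int rhs_int x_prim y_prim] x_t2 y_t2.
have [g_ge0 _] := hg.
have /andP[/ltW st2 t2_lt_tau] := ht2.
have t2t := ltW t2_lt_tau.
have y_incr s : t2 <= s <= tau -> omega <= y s.
  case/andP=> t2s st; apply: le_trans y_t2 _.
  apply: (primitive_nondecreasing rhs_int y_prim) => // r.
  by rewrite !mulr_ge0 ?negpart_ge0 ?g_ge0 ?(ltW hmu).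
split; last by apply: y_incr; rewrite t2t lexx.
have x_gain : omega * (tau - t2) <= x tau - x t2.
  apply: (primitive_increment_ge y_int x_prim) => // s /andP[/ltW t2s st].
  by apply: y_incr; rewrite t2s st.
move: homega; rewrite ler_pdivrMr ?subr_gt0 ?t2_lt_tau // => homega.
by have := lerD x_t2 (le_trans homega x_gain); rewrite !subrKC.
Qed.
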